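(* Let $n\ge2$, $\gamma\in\,]0,1]$, let $\varphi:\mathbb{R}^{n-1}\to\mathbb{R}$ be Hölder continuous with exponent $\gamma$ and best Hölder constant $\mathrm{Lip}_\gamma\varphi$, and let $\Omega=\{x: x_n<\varphi(\bar x)\}$, $G=\mathbb{R}^n\setminus\overline\Omega$. Let $x\in\mathbb{R}^n$, $r>0$ with $B_1(x,r)\cap G\neq\emptyset$. Let $h\in\mathbb{Z}$ be the minimal integer such that $B_1(x,r)\cap G_h\ne\emptyset$, and let $k\in\mathbb{Z}$ with $k\ge h+3$ and $B_1(x,r)\cap\tilde G_k\ne\emptyset$. Then $$|2^{-(h+3)}-2^{-k}|\le c\,(r+r^\gamma),$$ where $c$ depends only on $\gamma$ and $\mathrm{Lip}_\gamma\varphi$. Moreover, for every $E>0$ and every integer $h_0$ there exists $S>0$ depending only on $\gamma$, $\mathrm{Lip}_\gamma\varphi$, $E$ and $h_0$ such that, whenever $h\ge h_0$, for every $\eta=(\bar\eta,\eta_n)\in\mathbb{R}^n$ with $|\eta|<E$, $$\operatorname{diam}\Bigl(\bigcup_{k=h+3}^\infty\bigl(B_1(x,r)\cap\tilde G_k-(2^{-k/\gamma}\bar\eta,\ 2^{-k}\eta_n)\bigr)\Bigr)\le S(r+r^\gamma).$$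
   Context: Points are $x=(\bar x,x_n)$. $B_1(x,r)=\{y:|\bar x-\bar y|<r,\ |x_n-y_n|<r\}$. $\rho_n(x)=x_n-\varphi(\bar x)$; $G_k=\{x\in G: 2^{-k-1}<\rho_n(x)\le2^{-k}\}$ and $\tilde G_k=G_{k-1}\cup G_k\cup G_{k+1}=\{x\in G:2^{-k-2}<\rho_n(x)\le 2^{-k+1}\}$ for $k\in\mathbb{Z}$. $\operatorname{diam}$ is the Euclidean diameter; $C-v=\{y-v:y\in C\}$. *)

From HB Require Import structures.
From mathcomp Require Import all_boot all_order all_algebra.
From mathcomp Require Import all_classical all_reals all_analysis.
Set Implicit Arguments. Unset Strict Implicit. Unset Printing Implicit Defensive.
Import Order.TTheory GRing.Theory Num.Theory.
Import numFieldNormedType.Exports.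
Local Open Scope classical_set_scope.
Local Open Scope ring_scope.

(* A point of R^n, n = m+1, is written x = (xbar, x_n) with xbar in R^(n-1). *)
Definition pt (R : realType) (m : nat) := ('rV[R]_m * R)%type.

Definition L3_enorm (R : realType) (m : nat) (v : 'rV[R]_m) : R :=
  Num.sqrt (\sum_(i < m) v ord0 i ^+ 2).

Definition L3_edist (R : realType) (m : nat) (p q : pt R m) : R :=
  Num.sqrt (L3_enorm (p.1 - q.1) ^+ 2 + (p.2 - q.2) ^+ 2).

(* Euclidean diameter (in extended reals; -oo for the empty set). *)
Definition L3_diam (R : realType) (m : nat) (A : set (pt R m)) : \bar R :=
  ereal_sup [set (L3_edist p q)%:E | p in A & q in A].

Definition L3_holder (R : realType) (m : nat) (gamma L : R) (phi : 'rV[R]_m -> R) :=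
  forall a b, `|phi a - phi b| <= L * (L3_enorm (a - b)) `^ gamma.

Definition L3_best_holder_const (R : realType) (m : nat) (gamma L : R)
    (phi : 'rV[R]_m -> R) :=
  L3_holder gamma L phi /\ forall L', L3_holder gamma L' phi -> L <= L'.

Definition L3_B1 (R : realType) (m : nat) (x : pt R m) (r : R) : set (pt R m) :=
  [set y | L3_enorm (x.1 - y.1) < r /\ `|x.2 - y.2| < r].

Definition L3_Omega (R : realType) (m : nat) (phi : 'rV[R]_m -> R) : set (pt R m) :=
  [set x | x.2 < phi x.1].
Definition L3_Gdom (R : realType) (m : nat) (phi : 'rV[R]_m -> R) : set (pt R m) :=
  ~` closure (L3_Omega phi).

Definition L3_rho (R : realType) (m : nat) (phi : 'rV[R]_m -> R) (x : pt R m) : R :=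
  x.2 - phi x.1.

Definition L3_p2 (R : realType) (k : int) : R := (2 : R) `^ (- (k%:~R)).

Definition L3_Gk (R : realType) (m : nat) (phi : 'rV[R]_m -> R) (k : int) : set (pt R m) :=
  L3_Gdom phi `&` [set x | L3_p2 R (k + 1) < L3_rho phi x /\ L3_rho phi x <= L3_p2 R k].

Definition L3_Gtk (R : realType) (m : nat) (phi : 'rV[R]_m -> R) (k : int) : set (pt R m) :=
  L3_Gk phi (k - 1) `|` L3_Gk phi k `|` L3_Gk phi (k + 1).

Definition L3_shift (R : realType) (m : nat) (C : set (pt R m)) (v : pt R m) : set (pt R m) :=
  [set y | C (y.1 + v.1, y.2 + v.2)].

(* On B_1(x, r) the function rho = x_n - phi(xbar) oscillates by less than
   2 (r + Lip phi r^gamma), by the Hoelder bound.  A point of G_h has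
   rho > 2^(-h-1) while a point of G~_k with k >= h + 3 has rho <= 2^(-h-2), so
   if B_1(x, r) meets both then 2^(-h-3) < r + Lip phi r^gamma, which is the
   first estimate.  For the diameter, every shift (2^(-k/gamma) etabar, 2^(-k) eta_n)
   with k >= h + 3 has components at most E 2^(-h-3) 2^(-(h0+3)(1/gamma - 1))
   and E 2^(-h-3), because 1/gamma - 1 >= 0 and h >= h0. *)

From HB Require Import structures.
From mathcomp Require Import all_boot all_order all_algebra.
From mathcomp Require Import all_classical all_reals all_analysis.
From mathcomp Require Import ring lra zify.
Import Order.TTheory GRing.Theory Num.Theory.
Import numFieldNormedType.Exports.
Local Open Scope classical_set_scope.
Local Open Scope ring_scope.

Section EuclideanNorm.
Context {R : realType} {m : nat}.
Implicit Types u v : 'rV[R]_m.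

Lemma L3_enorm_ge0 u : 0 <= L3_enorm u.
Proof. exact: sqrtr_ge0. Qed.

Lemma L3_enorm_sqr u : L3_enorm u ^+ 2 = \sum_(i < m) u ord0 i ^+ 2.
Proof. by rewrite sqr_sqrtr // sumr_ge0 // => i _; rewrite sqr_ge0. Qed.

Lemma L3_enorm_eq0 u : L3_enorm u = 0 -> forall i, u ord0 i = 0.
Proof.
move=> u0 i; apply/eqP; rewrite -sqrf_eq0; apply/eqP.
have /eqP := L3_enorm_sqr u; rewrite u0 expr0n /= eq_sym psumr_eq0 => [/allP|j _].
  by move=> /(_ i (mem_index_enum _))/eqP.
by rewrite sqr_ge0.
Qed.

Lemma L3_CauchySchwarz u v :
  \sum_(i < m) u ord0 i * v ord0 i <= L3_enorm u * L3_enorm v.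
Proof.
set A := L3_enorm u; set B := L3_enorm v.
have [A0|A_neq0] := eqVneq A 0.
  by rewrite A0 mul0r big1 // => i _; rewrite (L3_enorm_eq0 _ A0) mul0r.
have [B0|B_neq0] := eqVneq B 0.
  by rewrite B0 mulr0 big1 // => i _; rewrite (L3_enorm_eq0 _ B0) mulr0.
have AB_gt0 : 0 < A * B.
  by rewrite mulr_gt0 // lt_neqAle eq_sym ?A_neq0 ?B_neq0 L3_enorm_ge0.
rewrite -(ler_pM2l AB_gt0).
(* AM-GM termwise: 2 A B u_i v_i <= B^2 u_i^2 + A^2 v_i^2. *)
have amgm : 2 * (A * B) * \sum_(i < m) u ord0 i * v ord0 i
    <= \sum_(i < m) (B ^+ 2 * u ord0 i ^+ 2 + A ^+ 2 * v ord0 i ^+ 2).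
  rewrite mulr_sumr; apply: ler_sum => i _.
  have := sqr_ge0 (B * u ord0 i - A * v ord0 i); nra.
move: amgm; rewrite big_split /= -!mulr_sumr -!L3_enorm_sqr -/A -/B; nra.
Qed.

Lemma L3_enormD u v : L3_enorm (u + v) <= L3_enorm u + L3_enorm v.
Proof.
have uv_ge0 := addr_ge0 (L3_enorm_ge0 u) (L3_enorm_ge0 v).
rewrite -(ger0_norm uv_ge0) -sqrtr_sqr {1}/L3_enorm ler_sqrt ?sqr_ge0 //.
have -> : \sum_(i < m) (u + v) ord0 i ^+ 2 = L3_enorm u ^+ 2
    + 2 * \sum_(i < m) u ord0 i * v ord0 i + L3_enorm v ^+ 2.
  rewrite !L3_enorm_sqr mulr_sumr -!big_split /=.
  by apply: eq_bigr => i _; rewrite !mxE; ring.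
have := L3_CauchySchwarz u v; nra.
Qed.

Lemma L3_enormZ a u : L3_enorm (a *: u) = `|a| * L3_enorm u.
Proof.
rewrite /L3_enorm -sqrtr_sqr -sqrtrM ?sqr_ge0 // mulr_sumr; congr Num.sqrt.
by apply: eq_bigr => i _; rewrite !mxE exprMn.
Qed.

Lemma L3_enormN u : L3_enorm (- u) = L3_enorm u.
Proof. by rewrite -scaleN1r L3_enormZ normrN normr1 mul1r. Qed.

End EuclideanNorm.

Section EuclideanDistance.
Context {R : realType} {m : nat}.
Implicit Types p q x : pt R m.

Lemma L3_edist_le p q : L3_edist p q <= L3_enorm (p.1 - q.1) + `|p.2 - q.2|.
Proof.
have e_ge0 := L3_enorm_ge0 (p.1 - q.1).
rewrite -(ger0_norm (addr_ge0 e_ge0 (normr_ge0 (p.2 - q.2)))) -sqrtr_sqr.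
rewrite /L3_edist ler_sqrt ?sqr_ge0 // -[(p.2 - q.2) ^+ 2]real_normK ?num_real //.
have := normr_ge0 (p.2 - q.2); nra.
Qed.

Lemma L3_edist_ge1 p q : L3_enorm (p.1 - q.1) <= L3_edist p q.
Proof.
rewrite -(ger0_norm (L3_enorm_ge0 _)) -sqrtr_sqr ler_sqrt ?addr_ge0 ?sqr_ge0 //.
by rewrite lerDl sqr_ge0.
Qed.

Lemma L3_edist_ge2 p q : `|p.2 - q.2| <= L3_edist p q.
Proof.
rewrite -sqrtr_sqr ler_sqrt ?addr_ge0 ?sqr_ge0 //.
by rewrite lerDr sqr_ge0.
Qed.

Lemma L3_diam_le (A : set (pt R m)) x d :
  (forall p, A p -> L3_enorm (x.1 - p.1) + `|x.2 - p.2| <= d) ->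
  (L3_diam A <= (2 * d)%:E)%E.
Proof.
move=> A_near; apply/ereal_supP => _ [p Ap [q Aq <-]]; rewrite lee_fin.
have := A_near p Ap; have := A_near q Aq.
have d1 : L3_enorm (p.1 - q.1) <= L3_enorm (x.1 - p.1) + L3_enorm (x.1 - q.1).
  have -> : p.1 - q.1 = x.1 - q.1 - (x.1 - p.1).
    by rewrite [in RHS]opprB [in RHS]addrC addrA subrK.
  by rewrite addrC -(L3_enormN (x.1 - p.1)) L3_enormD.
have d2 : `|p.2 - q.2| <= `|x.2 - p.2| + `|x.2 - q.2|.
  have -> : p.2 - q.2 = x.2 - q.2 - (x.2 - p.2).
    by rewrite [in RHS]opprB [in RHS]addrC addrA subrK.
  by rewrite addrC -(normrN (x.2 - p.2)) ler_normD.
have := L3_edist_le p q; lra.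
Qed.

Lemma L3_B1_shift_le {x r p} {e : pt R m} {s t : R} : 0 <= s -> 0 <= t ->
  L3_B1 x r (p.1 + s *: e.1, p.2 + t * e.2) ->
  L3_enorm (x.1 - p.1) + `|x.2 - p.2| <= 2 * r + s * L3_enorm e.1 + t * `|e.2|.
Proof.
move=> s_ge0 t_ge0 [/= B1 B2].
have d1 : L3_enorm (x.1 - p.1) <= L3_enorm (x.1 - (p.1 + s *: e.1)) + s * L3_enorm e.1.
  have -> : x.1 - p.1 = x.1 - (p.1 + s *: e.1) + s *: e.1.
    by rewrite opprD addrA subrK.
  by apply: le_trans (L3_enormD _ _) _; rewrite L3_enormZ ger0_norm.
have d2 : `|x.2 - p.2| <= `|x.2 - (p.2 + t * e.2)| + t * `|e.2|.
  have -> : x.2 - p.2 = x.2 - (p.2 + t * e.2) + t * e.2.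
    by rewrite opprD addrA subrK.
  by apply: le_trans (ler_normD _ _) _; rewrite normrM ger0_norm.
lra.
Qed.

End EuclideanDistance.

Section PowersOfTwo.
Context {R : realType}.

Lemma L3_p2_gt0 k : 0 < L3_p2 R k.
Proof. exact: powR_gt0. Qed.

Lemma L3_p2_le {j k : int} : j <= k -> L3_p2 R k <= L3_p2 R j.
Proof. by move=> jk; apply: ler_powR; rewrite ?lerN2 ?ler_int //; lra. Qed.

Lemma L3_p2S k : L3_p2 R (k + 1) = L3_p2 R k / 2.
Proof.
rewrite /L3_p2 intrD opprD powRD; last by apply/implyP => _; rewrite pnatr_eq0.
by rewrite powR_inv1 //; lra.
Qed.

Lemma L3_p2_powR k a : L3_p2 R k `^ a = 2 `^ (- k%:~R * a).
Proof. by rewrite /L3_p2 -powRrM. Qed.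

Lemma L3_p2_powRV_le (g : R) (j0 j k : int) : 0 < g -> g <= 1 ->
  j0 <= j -> j <= k ->
  L3_p2 R k `^ g^-1 <= L3_p2 R j * L3_p2 R j0 `^ (g^-1 - 1).
Proof.
move=> g_gt0 g_le1 j0j jk.
have p2_ge0 i : L3_p2 R i \is Num.nneg by rewrite nnegrE ltW ?L3_p2_gt0.
have pk_le : L3_p2 R k `^ g^-1 <= L3_p2 R j `^ g^-1.
  by apply: ge0_ler_powR; rewrite ?p2_ge0 ?L3_p2_le ?invr_ge0 ?(ltW g_gt0).
apply: le_trans pk_le _.
rewrite -{1}(subrK 1 g^-1) powRD; last by apply/implyP => _; rewrite gt_eqF ?L3_p2_gt0.
rewrite powRr1 -?nnegrE // mulrC ler_pM2l ?L3_p2_gt0 //.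
by apply: ge0_ler_powR; rewrite ?p2_ge0 ?L3_p2_le // subr_ge0 invf_ge1.
Qed.

End PowersOfTwo.

Definition L3_eta_shift {R : realType} {m : nat} (gamma : R) (eta : pt R m) (k : int)
  : pt R m :=
  ((2 : R) `^ (- k%:~R / gamma) *: eta.1, L3_p2 R k * eta.2).

Definition L3_radius_const {R : realType} (gamma L E : R) (h0 : int) : R :=
  2 + E * (1 + `|L|) * (L3_p2 R (h0 + 3) `^ (gamma^-1 - 1) + 1).

Lemma L3_radius_const_gt0 {R : realType} (gamma L E : R) (h0 : int) :
  0 <= E -> 0 < L3_radius_const gamma L E h0.
Proof.
move=> E_ge0; rewrite /L3_radius_const ltr_wpDr //.
by rewrite !mulr_ge0 ?addr_ge0 ?powR_ge0.
Qed.

Lemma L3_Gtk_rho_le {R : realType} {m} {phi : 'rV[R]_m -> R} {k : int} {z} :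
  L3_Gtk phi k z -> L3_rho phi z <= L3_p2 R (k - 1).
Proof.
have p2k : L3_p2 R k <= L3_p2 R (k - 1) by apply: L3_p2_le; lia.
have p2k1 : L3_p2 R (k + 1) <= L3_p2 R (k - 1) by apply: L3_p2_le; lia.
by case=> [[]|] [_ [_ rho_le]] //; apply: le_trans rho_le _.
Qed.

Section HolderBoundary.
Context {R : realType} {m : nat} {gamma L : R} {phi : 'rV[R]_m -> R}.
Hypothesis gamma_gt0 : 0 < gamma.
Hypothesis phi_holder : L3_holder gamma L phi.
Context {x : pt R m} {r : R}.

Lemma L3_holder_B1 {y} : L3_B1 x r y -> `|phi x.1 - phi y.1| <= `|L| * r `^ gamma.
Proof.
case=> By _; apply: le_trans (phi_holder _ _) _.
apply: le_trans (ler_wpM2r (powR_ge0 _ _) (ler_norm L)) _.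
apply: ler_wpM2l; first exact: normr_ge0.
have r_ge0 : 0 <= r := le_trans (L3_enorm_ge0 _) (ltW By).
by apply: ge0_ler_powR; rewrite ?nnegrE ?L3_enorm_ge0 ?(ltW gamma_gt0) ?(ltW By).
Qed.

Lemma L3_rho_sub_lt {y z} : L3_B1 x r y -> L3_B1 x r z ->
  L3_rho phi y - L3_rho phi z < 2 * (r + `|L| * r `^ gamma).
Proof.
move=> By Bz; have := L3_holder_B1 By; have := L3_holder_B1 Bz.
case: By => _; case: Bz => _; rewrite /L3_rho !ltr_norml !ler_norml.
move=> /andP[? ?] /andP[? ?] /andP[? ?] /andP[? ?]; lra.
Qed.

Lemma L3_p2_lt_B1_Gk_Gtk {y z} {h k : int} : h + 3 <= k ->
  L3_B1 x r y -> L3_Gk phi h y -> L3_B1 x r z -> L3_Gtk phi k z ->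
  L3_p2 R (h + 3) < r + `|L| * r `^ gamma.
Proof.
move=> hk By [_ [rho_y _]] Bz Gz.
have := L3_rho_sub_lt By Bz; have := L3_Gtk_rho_le Gz.
have : L3_p2 R (k - 1) <= L3_p2 R (h + 2) by apply: L3_p2_le; lia.
have -> : L3_p2 R (h + 3) = L3_p2 R (h + 2) / 2.
  by rewrite -L3_p2S; congr L3_p2; lia.
have -> : L3_p2 R (h + 2) = L3_p2 R (h + 1) / 2.
  by rewrite -L3_p2S; congr L3_p2; lia.
move: rho_y; lra.
Qed.

Hypothesis r_gt0 : 0 < r.

Lemma L3_p2_le_B1_Gk_Gtk {y z} {h k : int} : h + 3 <= k ->
  L3_B1 x r y -> L3_Gk phi h y -> L3_B1 x r z -> L3_Gtk phi k z ->
  L3_p2 R (h + 3) <= (1 + `|L|) * (r + r `^ gamma).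
Proof.
move=> hk By Gy Bz Gz; have := L3_p2_lt_B1_Gk_Gtk hk By Gy Bz Gz.
have := mulr_ge0 (normr_ge0 L) (ltW r_gt0); have := powR_ge0 r gamma; nra.
Qed.

Lemma L3_p2_gap_le {y z} {h k : int} : h + 3 <= k ->
  L3_B1 x r y -> L3_Gk phi h y -> L3_B1 x r z -> L3_Gtk phi k z ->
  `|L3_p2 R (h + 3) - L3_p2 R k| <= (1 + `|L|) * (r + r `^ gamma).
Proof.
move=> hk By Gy Bz Gz; apply: le_trans (L3_p2_le_B1_Gk_Gtk hk By Gy Bz Gz).
have := L3_p2_le (R:=R) hk; have := @L3_p2_gt0 R k; have := @L3_p2_gt0 R (h + 3).
rewrite ler_norml; move=> *; apply/andP; split; lra.
Qed.

Hypothesis gamma_le1 : gamma <= 1.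

Lemma L3_shift_Gtk_near {y} {h0 h k : int} {E : R} {eta p : pt R m} :
  h0 <= h -> h + 3 <= k -> L3_B1 x r y -> L3_Gk phi h y ->
  L3_edist eta (0, 0) < E ->
  L3_shift (L3_B1 x r `&` L3_Gtk phi k) (L3_eta_shift gamma eta k) p ->
  L3_enorm (x.1 - p.1) + `|x.2 - p.2|
    <= L3_radius_const gamma L E h0 * (r + r `^ gamma).
Proof.
move=> h0h hk By Gy eta_lt [Bz Gz].
set C := (1 + `|L|) * (r + r `^ gamma).
set P := L3_p2 R (h + 3); set M := L3_p2 R (h0 + 3) `^ (gamma^-1 - 1).
have P_le : P <= C := L3_p2_le_B1_Gk_Gtk hk By Gy Bz Gz.
have s_le : (2 : R) `^ (- k%:~R / gamma) <= P * M.
  by rewrite -L3_p2_powR L3_p2_powRV_le // lerD2r.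
have e1_lt : L3_enorm eta.1 < E.
  by rewrite -[eta.1]subr0; apply: le_lt_trans (L3_edist_ge1 _ _) eta_lt.
have e2_lt : `|eta.2| < E.
  by rewrite -[eta.2]subr0; apply: le_lt_trans (L3_edist_ge2 _ _) eta_lt.
have E_ge0 : 0 <= E := le_trans (normr_ge0 _) (ltW e2_lt).
have near := L3_B1_shift_le (powR_ge0 _ _) (ltW (L3_p2_gt0 k)) Bz.
have s_term := ler_pM (powR_ge0 _ _) (L3_enorm_ge0 _) s_le (ltW e1_lt).
have t_term : L3_p2 R k * `|eta.2| <= P * E.
  exact: ler_pM (ltW (L3_p2_gt0 k)) (normr_ge0 _) (L3_p2_le hk) (ltW e2_lt).
have PC : P * (M + 1) * E <= C * (M + 1) * E.
  by rewrite ler_wpM2r // ler_wpM2r // ?addr_ge0 ?powR_ge0.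
have -> : L3_radius_const gamma L E h0 * (r + r `^ gamma)
    = 2 * (r + r `^ gamma) + C * (M + 1) * E by rewrite /L3_radius_const /C -/M; ring.
move: near s_term t_term PC; have := powR_ge0 r gamma; lra.
Qed.

End HolderBoundary.

Theorem lemma3p2 (R : realType) (gamma L : R) :
  0 < gamma -> gamma <= 1 ->
  (exists c : R, forall (m : nat) (phi : 'rV[R]_m -> R) (x : pt R m) (r : R)
       (h k : int),
     (0 < m)%N -> L3_best_holder_const gamma L phi -> 0 < r ->
     L3_B1 x r `&` L3_Gdom phi !=set0 ->
     L3_B1 x r `&` L3_Gk phi h !=set0 ->
     (forall j : int, L3_B1 x r `&` L3_Gk phi j !=set0 -> h <= j) ->
     h + 3 <= k -> L3_B1 x r `&` L3_Gtk phi k !=set0 ->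
     `|L3_p2 R (h + 3) - L3_p2 R k| <= c * (r + r `^ gamma))
  /\
  (forall (Ebd : R) (h0 : int), 0 < Ebd ->
     exists S : R, 0 < S /\
     forall (m : nat) (phi : 'rV[R]_m -> R) (x : pt R m) (r : R) (h : int),
     (0 < m)%N -> L3_best_holder_const gamma L phi -> 0 < r ->
     L3_B1 x r `&` L3_Gdom phi !=set0 ->
     L3_B1 x r `&` L3_Gk phi h !=set0 ->
     (forall j : int, L3_B1 x r `&` L3_Gk phi j !=set0 -> h <= j) ->
     h0 <= h ->
     forall eta : pt R m, @L3_edist R m eta (0, 0) < Ebd ->
     (L3_diam
        (\bigcup_(k in [set k : int | (h + 3 <= k)%R])
           L3_shift (L3_B1 x r `&` L3_Gtk phi k)%classic
             ((((2 : R) `^ (- (k%:~R) / gamma))%R *: eta.1,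
               L3_p2 R k * eta.2)%R : pt R m))
      <= (S * (r + r `^ gamma))%R%:E)%E).
Proof.
move=> gamma_gt0 gamma_le1; split.
  exists (1 + `|L|) => m phi x r h k _ [holder _] r_gt0 _ [y [By Gy]] _ hk [z [Bz Gz]].
  exact (L3_p2_gap_le gamma_gt0 holder r_gt0 hk By Gy Bz Gz).
move=> E h0 E_gt0; exists (2 * L3_radius_const gamma L E h0).
split; first by rewrite mulr_gt0 // L3_radius_const_gt0 // ltW.
move=> m phi x r h _ [holder _] r_gt0 _ [y [By Gy]] _ h0h eta eta_lt.
rewrite -mulrA; apply: L3_diam_le => p [k hk shifted].
exact (L3_shift_Gtk_near gamma_gt0 holder r_gt0 gamma_le1 h0h hk By Gy eta_lt shifted).
Qed.
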